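(* The center $Z(X)$ of any $\mathsf{T_{z}S}$-closed semigroup $X$ is periodic.
   Context: $\mathsf{T_{z}S}$ is the class of Hausdorff zero-dimensional topological semigroups. A semigroup $X$ is $\mathsf{T_{z}S}$-closed if for every isomorphic topological embedding of $X$ (discrete topology) into some $Y\in\mathsf{T_{z}S}$ the image is closed in $Y$. $Z(X)=\{z\in X:\forall x\ (xz=zx)\}$. A semigroup is periodic if each element has some power $x^n$ ($n\ge1$) that is an idempotent. *)

From HB Require Import structures.
From mathcomp Require Import all_boot all_order.
From mathcomp Require Import all_classical topology.
Set Implicit Arguments. Unset Strict Implicit. Unset Printing Implicit Defensive.
Local Open Scope classical_set_scope.

Definition semigroup_law (X : Type) (mul : X -> X -> X) : Prop :=
  forall x y z, mul x (mul y z) = mul (mul x y) z.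

(* x^n for n >= 1:  spow mul x n = x^(n+1). *)
Fixpoint spow (X : Type) (mul : X -> X -> X) (x : X) (n : nat) : X :=
  match n with
  | O => x
  | S m => mul x (spow mul x m)
  end.

Definition sg_idempotent (X : Type) (mul : X -> X -> X) (e : X) : Prop :=
  mul e e = e.

Definition sg_center (X : Type) (mul : X -> X -> X) : set X :=
  [set z | forall x, mul x z = mul z x].

Definition sg_periodic_set (X : Type) (mul : X -> X -> X) (S : set X) : Prop :=
  forall x, S x -> exists n : nat, sg_idempotent mul (spow mul x n).

(* Zero-dimensional in the usual sense: the clopen sets form a base. *)
Definition clopen_base (Y : topologicalType) : Prop :=
  forall (x : Y) (U : set Y), open U -> U x ->
    exists V : set Y, [/\ clopen V, V x & V `<=` U].

Definition TzS (Y : topologicalType) (mulY : Y -> Y -> Y) : Prop :=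
  [/\ semigroup_law mulY,
      continuous (fun p : Y * Y => mulY p.1 p.2),
      hausdorff_space Y
    & clopen_base Y].

(* f : X -> Y is an isomorphic topological embedding of X, with X carrying the
   discrete topology: an injective homomorphism which is a homeomorphism onto its
   image (continuity is automatic from discreteness; continuity of the inverse
   means the image is discrete in the subspace topology). *)
Definition discrete_embedding (X : Type) (mul : X -> X -> X)
    (Y : topologicalType) (mulY : Y -> Y -> Y) (f : X -> Y) : Prop :=
  [/\ injective f,
      (forall x y, f (mul x y) = mulY (f x) (f y))
    & (forall x, exists U : set Y, open U /\ U `&` range f = [set f x])].

Definition TzS_closed (X : Type) (mul : X -> X -> X) : Prop :=
  forall (Y : topologicalType) (mulY : Y -> Y -> Y) (f : X -> Y),
    TzS mulY -> discrete_embedding mul mulY f -> closed (range f).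

From mathcomp Require Import all_boot all_order all_classical topology.
From HB Require Import structures.
From mathcomp Require Import zify.

Set Implicit Arguments. Unset Strict Implicit. Unset Printing Implicit Defensive.
Local Open Scope classical_set_scope.

(* Let z be a central element of X that is not periodic, so its powers z^n are
   pairwise distinct.  For c in X look at the z-orbit n |-> z^n c, and call c
   aperiodic if this orbit is not eventually periodic.  We adjoin to X one new
   point for each aperiodic c, up to "eventually equal orbits", standing for the
   limit of z^(k!) c as k grows; when the orbit of c is eventually periodic this
   limit already exists in X.  The resulting semigroup Y = X + Q multiplies new
   points as limits of products in X.  Its topology makes X discrete and takes as
   k-th basic neighbourhood of the limit of c the limits of all elements
   congruent to c "modulo k!" together with the points z^n c, k! | n.  Then X embeds discretely into the T_zS semigroup
   Y, but the new point limit of z^(k!) z lies in the closure of X. *)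

(* Multiples of k! : the exponents along which orbits are sampled at stage k. *)
Definition fact_multiple k n := 0 < n /\ k`! %| n.

Lemma fact_dvd_mono k k' : k <= k' -> k`! %| k'`!.
Proof. by move=> le_kk'; rewrite (fact_split le_kk') dvdn_mulr. Qed.

Lemma fact_multiple_fact k : fact_multiple k k`!.
Proof. by split; rewrite ?fact_gt0. Qed.

Lemma fact_multiple_add k n m :
  fact_multiple k n -> fact_multiple k m -> fact_multiple k (n + m).
Proof. by move=> [n_gt0 dvd_n] [m_gt0 dvd_m]; split; [lia | rewrite dvdn_add]. Qed.

Lemma fact_multiple_geq k n : fact_multiple k n -> k <= n.
Proof.
by move=> [n_gt0 dvd_n]; apply: leq_trans (fact_geq k) _; exact: dvdn_leq.
Qed.

Lemma fact_multiple_mono k k' n : k <= k' -> fact_multiple k' n -> fact_multiple k n.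
Proof.
by move=> le_kk' [n_gt0 dvd_n]; split => //; exact: dvdn_trans (fact_dvd_mono le_kk') dvd_n.
Qed.

Section CentralElement.
Variables (X : Type) (mul : X -> X -> X) (z : X).
Hypothesis mulA : semigroup_law mul.
Hypothesis zC : forall x, mul x z = mul z x.

Definition zpow n c := iter n (mul z) c.

Lemma zpowS n c : zpow n.+1 c = mul z (zpow n c).
Proof. by []. Qed.

Lemma zpowD n m c : zpow (n + m) c = zpow n (zpow m c).
Proof. exact: iterD. Qed.

Lemma zpowC n m c : zpow n (zpow m c) = zpow m (zpow n c).
Proof. by rewrite -!zpowD addnC. Qed.

Lemma zpow_mulr n x c : zpow n (mul c x) = mul (zpow n c) x.
Proof. by elim: n => [|n IH] //; rewrite !zpowS IH mulA. Qed.

(* Centrality of z lets the action pass through a left factor. *)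
Lemma zpow_mull n x c : zpow n (mul x c) = mul x (zpow n c).
Proof. by elim: n => [|n IH] //; rewrite !zpowS IH mulA -zC -mulA. Qed.

Lemma zpow_mul n m a b : mul (zpow n a) (zpow m b) = zpow (n + m) (mul a b).
Proof. by rewrite -zpow_mulr -zpow_mull zpowD. Qed.

Lemma spow_zpow n : spow mul z n = zpow n z.
Proof. by elim: n => //= n ->. Qed.

Definition zperiodic c := exists m d, 0 < d /\ zpow m c = zpow (m + d) c.

Lemma zperiodic_shift m d c : zpow m c = zpow (m + d) c ->
  forall t s, zpow (m + t + s * d) c = zpow (m + t) c.
Proof.
move=> per_c t; elim=> [|s IH]; first by rewrite mul0n addn0.
rewrite mulSn.
have -> : m + t + (d + s * d) = (t + s * d) + (m + d) by lia.
by rewrite zpowD -per_c -zpowD -IH; congr (zpow _ c); lia.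
Qed.

Lemma zperiodic_eq_mod m d c : 0 < d -> zpow m c = zpow (m + d) c ->
  forall n n', m <= n -> m <= n' -> d %| n -> d %| n' -> zpow n c = zpow n' c.
Proof.
move=> d_gt0 per_c.
suff le_case n n' : m <= n -> n <= n' -> d %| n -> d %| n' -> zpow n c = zpow n' c.
  move=> n n' mn mn' dn dn'; case: (leqP n n') => [le_nn'|lt_n'n].
    exact: le_case.
  by symmetry; apply: le_case => //; exact: ltnW.
move=> mn le_nn' dn dn'; have d_diff : d %| n' - n by exact: dvdn_sub.
have -> : n' = m + (n - m) + ((n' - n) %/ d) * d by rewrite divnK //; lia.
by rewrite (zperiodic_shift per_c); congr (zpow _ c); lia.
Qed.

Lemma aperiodic_zpow_inj c i j : ~ zperiodic c -> zpow i c = zpow j c -> i = j.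
Proof.
move=> aper_c eq_ij; case: (ltngtP i j) => // lt_ij; exfalso; apply: aper_c.
  by exists i, (j - i); split; [lia | rewrite eq_ij; congr (zpow _ c); lia].
by exists j, (i - j); split; [lia | rewrite -eq_ij; congr (zpow _ c); lia].
Qed.

Lemma zperiodic_idempotent : zperiodic z -> exists n, sg_idempotent mul (spow mul z n).
Proof.
move=> [m [d [d_gt0 per_z]]]; set P := m.+1 * d.
have mP : m.+1 <= P by rewrite /P leq_pmulr.
exists P.-1; rewrite /sg_idempotent spow_zpow -zpow_mulr -zpowS -zpowD.
have -> : P.-1 + P.-1.+1 = m + (P.-1 - m) + m.+1 * d by rewrite -/P; lia.
by rewrite zperiodic_shift //; congr (zpow _ z); lia.
Qed.

Lemma zperiodic_mull x c : zperiodic c -> zperiodic (mul x c).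
Proof. by move=> [m [d [d_gt0 per_c]]]; exists m, d; rewrite !zpow_mull per_c. Qed.

Lemma zperiodic_mulr x c : zperiodic c -> zperiodic (mul c x).
Proof. by move=> [m [d [d_gt0 per_c]]]; exists m, d; rewrite !zpow_mulr per_c. Qed.

Lemma zperiodic_zpow n c : zperiodic (zpow n c) <-> zperiodic c.
Proof.
split=> [[m [d [d_gt0 per_c]]] | [m [d [d_gt0 per_c]]]].
  by exists (m + n), d; split => //; rewrite zpowD per_c -zpowD; congr (zpow _ c); lia.
by exists m, d; split => //; rewrite zpowC per_c zpowC.
Qed.

Definition zequiv a b := exists m, zpow m a = zpow m b.

Lemma zequiv_refl a : zequiv a a.
Proof. by exists 0. Qed.

Lemma zequiv_sym a b : zequiv a b -> zequiv b a.
Proof. by move=> [m eq_ab]; exists m. Qed.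

Lemma zequiv_trans a b c : zequiv a b -> zequiv b c -> zequiv a c.
Proof.
by move=> [m eq_ab] [n eq_bc]; exists (m + n); rewrite zpowD zpowC eq_ab zpowC eq_bc -zpowD.
Qed.

Lemma zequiv_mull x a b : zequiv a b -> zequiv (mul x a) (mul x b).
Proof. by move=> [m eq_ab]; exists m; rewrite !zpow_mull eq_ab. Qed.

Lemma zequiv_mulr x a b : zequiv a b -> zequiv (mul a x) (mul b x).
Proof. by move=> [m eq_ab]; exists m; rewrite !zpow_mulr eq_ab. Qed.

Lemma zequiv_zperiodic a b : zequiv a b -> zperiodic a -> zperiodic b.
Proof. by move=> [m eq_ab] /(zperiodic_zpow m); rewrite eq_ab => /zperiodic_zpow. Qed.

Definition zcong k a b := exists i j, [/\ k`! %| i, k`! %| j & zpow i a = zpow j b].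

Lemma zcong_refl k a : zcong k a a.
Proof. by exists 0, 0; split; rewrite ?dvdn0. Qed.

Lemma zcong_sym k a b : zcong k a b -> zcong k b a.
Proof. by move=> [i [j [dvd_i dvd_j eq_ij]]]; exists j, i. Qed.

Lemma zcong_trans k a b c : zcong k a b -> zcong k b c -> zcong k a c.
Proof.
move=> [i [j [dvd_i dvd_j eq_ab]]] [i' [j' [dvd_i' dvd_j' eq_bc]]].
exists (i + i'), (j + j'); split; rewrite ?dvdn_add //.
by rewrite addnC zpowD eq_ab zpowC eq_bc zpowC -zpowD addnC.
Qed.

Lemma zcong_mono k k' a b : k <= k' -> zcong k' a b -> zcong k a b.
Proof.
move=> le_kk' [i [j [dvd_i dvd_j eq_ab]]]; exists i, j.
by split => //; exact: dvdn_trans (fact_dvd_mono le_kk') _.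
Qed.

Lemma zcong_zperiodic k a b : zcong k a b -> zperiodic a -> zperiodic b.
Proof.
by move=> [i [j [_ _ eq_ab]]] /(zperiodic_zpow i); rewrite eq_ab => /zperiodic_zpow.
Qed.

Lemma zcong_mul k a b a' b' : zcong k a a' -> zcong k b b' ->
  zcong k (mul a b) (mul a' b').
Proof.
move=> [i [j [dvd_i dvd_j eq_a]]] [i' [j' [dvd_i' dvd_j' eq_b]]].
exists (i + i'), (j + j'); split; rewrite ?dvdn_add //.
by rewrite -!zpow_mul eq_a eq_b.
Qed.

Lemma zcong_zpow k n a : k`! %| n -> zcong k (zpow n a) a.
Proof. by move=> dvd_n; exists 0, n; split; rewrite ?dvdn0. Qed.

Lemma zequiv_zcong k a b : zequiv a b -> zcong k a b.
Proof.
move=> [m eq_ab]; exists (m * k`!), (m * k`!); split; rewrite ?dvdn_mull //.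
have m_le : m <= m * k`! by rewrite leq_pmulr // fact_gt0.
by rewrite -(subnK m_le) zpowD eq_ab -zpowD.
Qed.

Definition zlimit c y := exists k, forall n, fact_multiple k n -> zpow n c = y.

Definition zlim c : X :=
  match pselect (exists y, zlimit c y) with
  | left has_lim => sval (cid has_lim)
  | right _ => c
  end.

Lemma zperiodic_zlimit c : zperiodic c -> exists y, zlimit c y.
Proof.
move=> [m [d [d_gt0 per_c]]]; exists (zpow (m + d)`! c), (m + d) => n mult_n.
apply: (zperiodic_eq_mod d_gt0 per_c).
- by apply: leq_trans (fact_multiple_geq mult_n); lia.
- by apply: leq_trans (fact_geq _); lia.
- by apply: dvdn_trans (proj2 mult_n); apply: dvdn_fact; lia.
- by apply: dvdn_fact; lia.
Qed.

Lemma zlimit_uniq c y y' : zlimit c y -> zlimit c y' -> y = y'.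
Proof.
move=> [k lim_y] [k' lim_y']; have mult : fact_multiple k (k`! * k'`!).
  by split; rewrite ?muln_gt0 ?fact_gt0 ?dvdn_mulr.
have mult' : fact_multiple k' (k`! * k'`!).
  by split; rewrite ?muln_gt0 ?fact_gt0 ?dvdn_mull.
by rewrite -(lim_y _ mult) (lim_y' _ mult').
Qed.

Lemma zlimP c : zperiodic c -> zlimit c (zlim c).
Proof.
move=> per_c; rewrite /zlim; case: pselect => [has_lim | no_lim]; first by case: cid.
by case: no_lim; exact: zperiodic_zlimit.
Qed.

Lemma zlim_eq c y : zperiodic c -> zlimit c y -> zlim c = y.
Proof. by move=> per_c; exact: zlimit_uniq (zlimP per_c). Qed.

Lemma zlim_mull x c : zperiodic c -> zlim (mul x c) = mul x (zlim c).
Proof.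
move=> per_c; apply: zlim_eq; first exact: zperiodic_mull.
by have [k lim_c] := zlimP per_c; exists k => n mult_n; rewrite zpow_mull lim_c.
Qed.

Lemma zlim_mulr x c : zperiodic c -> zlim (mul c x) = mul (zlim c) x.
Proof.
move=> per_c; apply: zlim_eq; first exact: zperiodic_mulr.
by have [k lim_c] := zlimP per_c; exists k => n mult_n; rewrite zpow_mulr lim_c.
Qed.

Lemma zperiodic_zlim c : zperiodic c -> zperiodic (zlim c).
Proof.
move=> per_c; have [k lim_c] := zlimP per_c.
by rewrite -(lim_c k`! (fact_multiple_fact k)); apply/zperiodic_zpow.
Qed.

Lemma zlim_idem c : zperiodic c -> zlim (zlim c) = zlim c.
Proof.
move=> per_c; apply: zlim_eq; first exact: zperiodic_zlim.
have [k lim_c] := zlimP per_c; exists k => n mult_n.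
rewrite -{1}(lim_c k`! (fact_multiple_fact k)) -zpowD.
by apply: lim_c; apply: fact_multiple_add => //; exact: fact_multiple_fact.
Qed.

Lemma zlim_zequiv a b : zequiv a b -> zperiodic a -> zlim a = zlim b.
Proof.
move=> [m eq_ab] per_a; symmetry; apply: zlim_eq.
  exact: zequiv_zperiodic (ex_intro _ m eq_ab) per_a.
have [k lim_a] := zlimP per_a; exists (maxn k m) => n mult_n.
have le_mn : m <= n by apply: leq_trans (fact_multiple_geq mult_n); exact: leq_maxr.
rewrite -(subnK le_mn) zpowD -eq_ab -zpowD subnK //; apply: lim_a.
by apply: fact_multiple_mono mult_n; exact: leq_maxl.
Qed.

Lemma zlim_zcong a b k : zperiodic a ->
  (forall n, fact_multiple k n -> zpow n a = zlim a) -> zcong k b a -> zlim b = zlim a.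
Proof.
move=> per_a lim_a cong_ba; apply: zlim_eq.
  exact: zcong_zperiodic (zcong_sym cong_ba) per_a.
have [i [j [dvd_i dvd_j eq_ij]]] := cong_ba.
exists (maxn k i.+1) => n mult_n.
have lt_in : i < n by apply: leq_trans (fact_multiple_geq mult_n); exact: leq_maxr.
have [n_gt0 dvd_n] : fact_multiple k n by apply: fact_multiple_mono mult_n; exact: leq_maxl.
rewrite -(subnK (ltnW lt_in)) zpowD eq_ij -zpowD; apply: lim_a; split; first lia.
by apply: dvdn_add => //; exact: dvdn_sub.
Qed.

(* The new points: zequiv-classes of elements with aperiodic orbit. *)
Definition aper_class := {S : set X | exists a, ~ zperiodic a /\ S = zequiv a}.

Definition class_of c (aper_c : ~ zperiodic c) : aper_class :=
  exist _ (zequiv c) (ex_intro _ c (conj aper_c erefl)).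

Definition class_rep (q : aper_class) : X := sval (cid (proj2_sig q)).

Lemma class_repP q : ~ zperiodic (class_rep q) /\ sval q = zequiv (class_rep q).
Proof. by rewrite /class_rep; case: cid. Qed.

Lemma class_of_eq c1 c2 (aper1 : ~ zperiodic c1) (aper2 : ~ zperiodic c2) :
  zequiv c1 c2 -> class_of aper1 = class_of aper2.
Proof.
move=> equiv12; apply: eq_exist; apply/seteqP; split => b /= equiv_b.
  exact: zequiv_trans (zequiv_sym equiv12) equiv_b.
exact: zequiv_trans equiv12 equiv_b.
Qed.

Lemma class_rep_zequiv c (aper_c : ~ zperiodic c) : zequiv (class_rep (class_of aper_c)) c.
Proof.
have [_ def_q] := class_repP (class_of aper_c).
by have := zequiv_refl c; rewrite -[zequiv c]/(sval (class_of aper_c)) def_q.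
Qed.

(* The extension Y = X + Q, and the point limpt c of Y, limit of z^(k!) c. *)
Definition ext := (X + aper_class)%type.

Definition limpt c : ext :=
  match pselect (zperiodic c) with
  | left _ => inl (zlim c)
  | right aper_c => inr (class_of aper_c)
  end.

Definition unext (u : ext) : X :=
  match u with inl x => x | inr q => class_rep q end.

Definition ext_mul (u v : ext) : ext :=
  match u, v with
  | inl x, inl y => inl (mul x y)
  | _, _ => limpt (mul (unext u) (unext v))
  end.

Lemma limpt_per c : zperiodic c -> limpt c = inl (zlim c).
Proof. by move=> per_c; rewrite /limpt; case: pselect. Qed.

Lemma limpt_aper c (aper_c : ~ zperiodic c) : limpt c = inr (class_of aper_c).
Proof.
rewrite /limpt; case: pselect => [// | aper_c']; congr inr.
by rewrite (Prop_irrelevance aper_c aper_c').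
Qed.

Lemma inr_limpt q : inr q = limpt (class_rep q).
Proof.
have [aper_rep def_q] := class_repP q; rewrite (limpt_aper aper_rep); congr inr.
by move: aper_rep def_q; case: q => S hS aper_rep /= def_q; exact: eq_exist.
Qed.

Lemma limpt_zequiv a b : zequiv a b -> limpt a = limpt b.
Proof.
move=> equiv_ab; case: (pselect (zperiodic a)) => [per_a | aper_a].
  rewrite (limpt_per per_a) (limpt_per (zequiv_zperiodic equiv_ab per_a)).
  by rewrite (zlim_zequiv equiv_ab).
have aper_b : ~ zperiodic b by move/(zequiv_zperiodic (zequiv_sym equiv_ab)).
by rewrite (limpt_aper aper_a) (limpt_aper aper_b); congr inr; exact: class_of_eq.
Qed.

Lemma ext_mul_inl x y : ext_mul (inl x) (inl y) = inl (mul x y).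
Proof. by []. Qed.

Lemma ext_mul_inl_limpt x c : ext_mul (inl x) (limpt c) = limpt (mul x c).
Proof.
case: (pselect (zperiodic c)) => [per_c | aper_c].
  by rewrite (limpt_per per_c) (limpt_per (zperiodic_mull x per_c)) zlim_mull.
rewrite (limpt_aper aper_c); apply: limpt_zequiv.
by apply: zequiv_mull; exact: class_rep_zequiv.
Qed.

Lemma ext_mul_limpt_inl c y : ext_mul (limpt c) (inl y) = limpt (mul c y).
Proof.
case: (pselect (zperiodic c)) => [per_c | aper_c].
  by rewrite (limpt_per per_c) (limpt_per (zperiodic_mulr y per_c)) zlim_mulr.
rewrite (limpt_aper aper_c); apply: limpt_zequiv.
by apply: zequiv_mulr; exact: class_rep_zequiv.
Qed.

Lemma ext_mul_limpt c d : ext_mul (limpt c) (limpt d) = limpt (mul c d).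
Proof.
case: (pselect (zperiodic c)) => [per_c | aper_c];
  case: (pselect (zperiodic d)) => [per_d | aper_d].
- rewrite (limpt_per per_c) (limpt_per per_d) (limpt_per (zperiodic_mulr d per_c)) /=.
  by rewrite -(zlim_mull _ per_d) -(zlim_mulr _ per_c) zlim_idem //; exact: zperiodic_mulr.
- have per_lim_c := zperiodic_zlim per_c.
  rewrite (limpt_per per_c) ext_mul_inl_limpt (limpt_per (zperiodic_mulr d per_c)).
  by rewrite (limpt_per (zperiodic_mulr d per_lim_c)) !zlim_mulr // zlim_idem.
- have per_lim_d := zperiodic_zlim per_d.
  rewrite (limpt_per per_d) ext_mul_limpt_inl (limpt_per (zperiodic_mull c per_d)).
  by rewrite (limpt_per (zperiodic_mull c per_lim_d)) !zlim_mull // zlim_idem.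
- rewrite (limpt_aper aper_c) (limpt_aper aper_d) /=; apply: limpt_zequiv.
  apply: zequiv_trans (zequiv_mulr _ (class_rep_zequiv aper_c)) _.
  exact: zequiv_mull _ (class_rep_zequiv aper_d).
Qed.

Lemma ext_mulA : semigroup_law ext_mul.
Proof.
move=> [x|q] [y|q'] [w|q'']; rewrite ?(inr_limpt q) ?(inr_limpt q') ?(inr_limpt q'');
  by rewrite !(ext_mul_inl, ext_mul_inl_limpt, ext_mul_limpt_inl, ext_mul_limpt) mulA.
Qed.

Definition basic k c : set ext :=
  [set u | (exists c', zcong k c' c /\ u = limpt c') \/
           (exists n, fact_multiple k n /\ u = inl (zpow n c))].

Lemma basic_mono k k' c : k <= k' -> basic k' c `<=` basic k c.
Proof.
move=> le_kk' u [[c' [cong_c' ->]] | [n [mult_n ->]]].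
  by left; exists c'; split => //; exact: zcong_mono cong_c'.
by right; exists n; split => //; exact: fact_multiple_mono mult_n.
Qed.

(* Open sets of Y: points of X are isolated, and a new point q has the sets
   basic k (class_rep q) as a neighbourhood base. *)
Definition ext_open (O : set ext) :=
  forall q, O (inr q) -> exists k, basic k (class_rep q) `<=` O.

Lemma ext_openT : ext_open setT.
Proof. by move=> q _; exists 0. Qed.

Lemma ext_openI : setI_closed ext_open.
Proof.
move=> A B openA openB q [/openA [k1 sub1] /openB [k2 sub2]].
exists (maxn k1 k2) => u basic_u; split.
  by apply: sub1; apply: basic_mono basic_u; exact: leq_maxl.
by apply: sub2; apply: basic_mono basic_u; exact: leq_maxr.
Qed.

Lemma ext_open_bigcup (I : Type) (f : I -> set ext) :
  (forall i, ext_open (f i)) -> ext_open (\bigcup_i f i).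
Proof.
move=> open_f q [i _ fi_q]; have [k sub_k] := open_f i q fi_q.
by exists k => u /sub_k fi_u; exists i.
Qed.

HB.instance Definition _ := gen_eqMixin ext.
HB.instance Definition _ := gen_choiceMixin ext.
HB.instance Definition _ :=
  isOpenTopological.Build ext ext_openT ext_openI ext_open_bigcup.

Lemma open_extE (O : set ext) : open O = ext_open O.
Proof. by []. Qed.

Lemma nbhs_extE (u : ext) W : nbhs u W = exists O, [/\ ext_open O, O u & O `<=` W].
Proof. by []. Qed.

Lemma basic_limpt k c : basic k c (limpt c).
Proof. by left; exists c; split => //; exact: zcong_refl. Qed.

Lemma basic_inr k q : basic k (class_rep q) (inr q).
Proof. by rewrite inr_limpt; exact: basic_limpt. Qed.

Lemma basic_zpow k n c : fact_multiple k n -> basic k c (inl (zpow n c)).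
Proof. by move=> mult_n; right; exists n. Qed.

Lemma basic_mul_inl_l k x b v : basic k b v -> basic k (mul x b) (ext_mul (inl x) v).
Proof.
move=> [[b' [cong_b ->]] | [n [mult_n ->]]].
  rewrite ext_mul_inl_limpt; left; exists (mul x b'); split => //.
  by apply: zcong_mul => //; exact: zcong_refl.
by rewrite ext_mul_inl -zpow_mull; exact: basic_zpow.
Qed.

Lemma basic_mul_inl_r k y a u : basic k a u -> basic k (mul a y) (ext_mul u (inl y)).
Proof.
move=> [[a' [cong_a ->]] | [n [mult_n ->]]].
  rewrite ext_mul_limpt_inl; left; exists (mul a' y); split => //.
  by apply: zcong_mul => //; exact: zcong_refl.
by rewrite ext_mul_inl -zpow_mulr; exact: basic_zpow.
Qed.

Lemma basic_mul k a b u v : basic k a u -> basic k b v -> basic k (mul a b) (ext_mul u v).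
Proof.
move=> [[a' [cong_a ->]] | [n [mult_n ->]]] [[b' [cong_b ->]] | [m [mult_m ->]]].
- by rewrite ext_mul_limpt; left; exists (mul a' b'); split => //; exact: zcong_mul.
- rewrite ext_mul_limpt_inl; left; exists (mul a' (zpow m b)); split => //.
  by apply: zcong_mul => //; apply: zcong_zpow; case: mult_m.
- rewrite ext_mul_inl_limpt; left; exists (mul (zpow n a) b'); split => //.
  by apply: zcong_mul => //; apply: zcong_zpow; case: mult_n.
- by rewrite ext_mul_inl zpow_mul; apply: basic_zpow; exact: fact_multiple_add.
Qed.

Lemma basic_sub k a b : zcong k b a -> exists K, basic K b `<=` basic k a.
Proof.
move=> cong_ba; have [i [j [dvd_i dvd_j eq_ij]]] := cong_ba.
exists (maxn k i.+1) => u [[c' [cong_c' ->]] | [n [mult_n ->]]].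
  left; exists c'; split => //; apply: zcong_trans _ cong_ba.
  by apply: zcong_mono cong_c'; exact: leq_maxl.
have lt_in : i < n by apply: leq_trans (fact_multiple_geq mult_n); exact: leq_maxr.
have [n_gt0 dvd_n] : fact_multiple k n by apply: fact_multiple_mono mult_n; exact: leq_maxl.
rewrite -(subnK (ltnW lt_in)) zpowD eq_ij -zpowD; apply: basic_zpow; split; first lia.
by apply: dvdn_add => //; exact: dvdn_sub.
Qed.

Lemma basic_inr_zcong k a q : basic k a (inr q) -> zcong k (class_rep q) a.
Proof.
move=> [[c' [cong_c' def_q]] | [n [_ //]]].
case: (pselect (zperiodic c')) => [per_c' | aper_c'].
  by move: def_q; rewrite limpt_per.
move: def_q; rewrite (limpt_aper aper_c') => -[->].
by apply: zcong_trans cong_c'; apply: zequiv_zcong; exact: class_rep_zequiv.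
Qed.

Lemma ext_open_inl x : ext_open [set inl x].
Proof. by []. Qed.

Lemma ext_open_basic k a : ext_open (basic k a).
Proof. by move=> q /basic_inr_zcong; exact: basic_sub. Qed.

Lemma nbhs_inl x : nbhs (inl x : ext) [set inl x].
Proof. by rewrite nbhs_extE; exists [set inl x]; split => //; exact: ext_open_inl. Qed.

Lemma nbhs_basic k q : nbhs (inr q : ext) (basic k (class_rep q)).
Proof.
rewrite nbhs_extE; exists (basic k (class_rep q)); split => //.
  exact: ext_open_basic.
exact: basic_inr.
Qed.

Lemma nbhs_limpt c W : nbhs (limpt c) W -> exists k, basic k c `<=` W.
Proof.
rewrite nbhs_extE => -[O [open_O O_c sub_OW]].
case: (pselect (zperiodic c)) => [per_c | aper_c].
  have [k lim_c] := zlimP per_c; exists k.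
  move: O_c; rewrite (limpt_per per_c) => O_c.
  move=> u [[c' [cong_c' ->]] | [n [mult_n ->]]]; apply: sub_OW; last by rewrite lim_c.
  have per_c' : zperiodic c' := zcong_zperiodic (zcong_sym cong_c') per_c.
  by rewrite (limpt_per per_c') (zlim_zcong per_c lim_c cong_c').
move: O_c; rewrite (limpt_aper aper_c) => /open_O [k sub_k].
have [K sub_K] : exists K, basic K c `<=` basic k (class_rep (class_of aper_c)).
  by apply: basic_sub; apply: zequiv_zcong; apply: zequiv_sym; exact: class_rep_zequiv.
by exists K => u /sub_K /sub_k; exact: sub_OW.
Qed.

Lemma basic_meet_zcong k a b w : ~ zperiodic a -> ~ zperiodic b ->
  basic k a w -> basic k b w -> zcong k a b.
Proof.
move=> aper_a aper_b.
have aper_cong c d : zcong k c d -> ~ zperiodic d -> ~ zperiodic c.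
  by move=> cong_cd aper_d /(zcong_zperiodic cong_cd).
move=> [[c1 [cong1 ->]] | [n [mult_n ->]]] [[c2 [cong2 eq12]] | [m [mult_m eq12]]].
- have aper1 := aper_cong _ _ cong1 aper_a; have aper2 := aper_cong _ _ cong2 aper_b.
  move: eq12; rewrite (limpt_aper aper1) (limpt_aper aper2) => -[eq_classes].
  have equiv12 : zequiv c1 c2 by rewrite eq_classes; exact: zequiv_refl.
  apply: zcong_trans (zcong_sym cong1) _; apply: zcong_trans cong2.
  exact: zequiv_zcong.
- by move: eq12; rewrite (limpt_aper (aper_cong _ _ cong1 aper_a)).
- by move: eq12; rewrite (limpt_aper (aper_cong _ _ cong2 aper_b)).
- by move: eq12 => -[eq_nm]; exists n, m; split => //; [case: mult_n | case: mult_m].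
Qed.

Lemma inl_notin_basic x a : ~ zperiodic a -> exists k, ~ basic k a (inl x).
Proof.
move=> aper_a.
have limpt_neq k c' : zcong k c' a -> limpt c' <> inl x.
  move=> cong_c'; have aper_c' : ~ zperiodic c' by move/(zcong_zperiodic cong_c').
  by rewrite (limpt_aper aper_c').
case: (pselect (exists n, x = zpow n a)) => [[n0 def_x] | not_orbit].
  exists n0.+1 => -[[c' [cong_c' /esym]] | [n [mult_n [eq_x]]]].
    exact: limpt_neq cong_c'.
  have := fact_multiple_geq mult_n.
  by rewrite -(aperiodic_zpow_inj aper_a (etrans (esym def_x) eq_x)) ltnn.
exists 0 => -[[c' [cong_c' /esym]] | [n [mult_n [eq_x]]]].
  exact: limpt_neq cong_c'.
by apply: not_orbit; exists n.
Qed.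

Lemma not_zequiv_zcong a b : ~ zperiodic b -> ~ zequiv a b -> exists k, ~ zcong k a b.
Proof.
move=> aper_b not_equiv; apply: contrapT => all_cong.
have cong k : zcong k a b by apply: contrapT => not_cong; apply: all_cong; exists k.
have [i [j [_ _ eq_ij]]] := cong 0.
have [i' [j' [dvd_i' dvd_j' eq_ij']]] := cong (i + j).+1.
have shift_eq : i' + j = i + j'.
  apply: (aperiodic_zpow_inj aper_b).
  by rewrite zpowD -eq_ij -zpowD addnC zpowD eq_ij' -zpowD.
have big_fact := fact_geq (i + j).+1.
set M := (i + j).+1`! in dvd_i' dvd_j' big_fact.
case: (ltngtP i j) => [lt_ij | lt_ji | eq_ij_].
- have dvd_diff : M %| j - i by rewrite (_ : j - i = j' - i'); [exact: dvdn_sub | lia].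
  by have := dvdn_leq (_ : 0 < j - i) dvd_diff; lia.
- have dvd_diff : M %| i - j by rewrite (_ : i - j = i' - j'); [exact: dvdn_sub | lia].
  by have := dvdn_leq (_ : 0 < i - j) dvd_diff; lia.
- by apply: not_equiv; exists i; rewrite eq_ij eq_ij_.
Qed.

Lemma ext_separate (p q : ext) : p <> q ->
  exists A B, [/\ nbhs p A, nbhs q B & forall w, A w -> B w -> False].
Proof.
case: p => [x | q1]; case: q => [y | q2] neq.
- exists [set inl x], [set inl y]; split; try exact: nbhs_inl.
  by move=> w -> [eq_xy]; apply: neq; rewrite eq_xy.
- have [k not_basic] := inl_notin_basic x (class_repP q2).1.
  exists [set inl x], (basic k (class_rep q2)).
  split; [exact: nbhs_inl | exact: nbhs_basic |].
  by move=> w -> /not_basic.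
- have [k not_basic] := inl_notin_basic y (class_repP q1).1.
  exists (basic k (class_rep q1)), [set inl y].
  split; [exact: nbhs_basic | exact: nbhs_inl |].
  by move=> w /[swap] -> /not_basic.
- have not_equiv : ~ zequiv (class_rep q1) (class_rep q2).
    by move=> /limpt_zequiv equiv12; apply: neq; rewrite !inr_limpt.
  have [k not_cong] := not_zequiv_zcong (class_repP q2).1 not_equiv.
  exists (basic k (class_rep q1)), (basic k (class_rep q2)); split; try exact: nbhs_basic.
  move=> w basic1 basic2; apply: not_cong.
  exact: basic_meet_zcong (class_repP q1).1 (class_repP q2).1 basic1 basic2.
Qed.

Lemma ext_hausdorff : hausdorff_space ext.
Proof.
move=> p q cluster_pq; apply: contrapT => neq.
have [A [B [nbhs_A nbhs_B disj]]] := ext_separate neq.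
by have [w [A_w B_w]] := cluster_pq A B nbhs_A nbhs_B; exact: disj w A_w B_w.
Qed.

Lemma clopen_basic k q : clopen (basic k (class_rep q)).
Proof.
split; first exact: ext_open_basic.
rewrite -openC open_extE => q' not_basic; exists k => w basic' basic_w; apply: not_basic.
have cong_qq' := basic_meet_zcong (class_repP q).1 (class_repP q').1 basic_w basic'.
by rewrite inr_limpt; left; exists (class_rep q'); split => //; exact: zcong_sym.
Qed.

Lemma clopen_inl x : clopen [set (inl x : ext)].
Proof.
split; first exact: ext_open_inl.
rewrite -openC open_extE => q' _.
have [k not_basic] := inl_notin_basic x (class_repP q').1.
by exists k => w basic_w eq_w; apply: not_basic; rewrite -eq_w.
Qed.

Lemma ext_clopen_base : clopen_base ext.
Proof.
move=> [x | q] U open_U U_u.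
  by exists [set inl x]; split => //; [exact: clopen_inl | move=> w ->].
have [k sub_k] := open_U q U_u.
by exists (basic k (class_rep q)); split => //; [exact: clopen_basic | exact: basic_inr].
Qed.

Lemma ext_mul_continuous : continuous (fun p : ext * ext => ext_mul p.1 p.2).
Proof.
move=> [u v] W nbhs_W /=.
case: u nbhs_W => [x | q]; case: v => [y | q'] nbhs_W /=.
- exists ([set inl x], [set inl y]); first by split; exact: nbhs_inl.
  by move=> [a b] /= [-> ->]; exact: nbhs_singleton nbhs_W.
- have [k sub_k] := nbhs_limpt nbhs_W.
  exists ([set inl x], basic k (class_rep q')).
    by split; [exact: nbhs_inl | exact: nbhs_basic].
  by move=> [a b] /= [-> basic_b]; apply: sub_k; exact: basic_mul_inl_l.
- have [k sub_k] := nbhs_limpt nbhs_W.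
  exists (basic k (class_rep q), [set inl y]).
    by split; [exact: nbhs_basic | exact: nbhs_inl].
  by move=> [a b] /= [basic_a ->]; apply: sub_k; exact: basic_mul_inl_r.
- have [k sub_k] := nbhs_limpt nbhs_W.
  exists (basic k (class_rep q), basic k (class_rep q')); first by split; exact: nbhs_basic.
  by move=> [a b] /= [basic_a basic_b]; apply: sub_k; exact: basic_mul.
Qed.

Lemma ext_TzS : TzS ext_mul.
Proof.
by split; [exact: ext_mulA | exact: ext_mul_continuous | exact: ext_hausdorff
          | exact: ext_clopen_base].
Qed.

Lemma inl_discrete_embedding : discrete_embedding mul ext_mul inl.
Proof.
split; [by move=> a b [] | by [] | move=> x].
exists [set inl x]; split; first exact: ext_open_inl.
by apply/seteqP; split => [w [] // | w ->]; split => //; exists x.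
Qed.

Lemma class_in_closure c (aper_c : ~ zperiodic c) :
  closure (range (inl : X -> ext)) (inr (class_of aper_c)).
Proof.
move=> B nbhs_B; have nbhs_B' : nbhs (limpt c) B by rewrite (limpt_aper aper_c).
have [k sub_k] := nbhs_limpt nbhs_B'.
exists (inl (zpow k`! c)); split; first by exists (zpow k`! c).
by apply: sub_k; apply: basic_zpow; exact: fact_multiple_fact.
Qed.

End CentralElement.

Theorem lemma5p4 (X : Type) (mul : X -> X -> X) :
  semigroup_law mul -> TzS_closed mul -> sg_periodic_set mul (sg_center mul).
Proof.
move=> mulA X_closed z zC; apply: contrapT => not_periodic.
have aper_z : ~ zperiodic mul z z.
  by move=> per_z; apply: not_periodic; exact: zperiodic_idempotent.
have closed_X := X_closed _ _ _ (ext_TzS mulA zC) (inl_discrete_embedding mul z).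
by have [x _] := closed_X _ (class_in_closure (aper_c := aper_z)).
Qed.
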